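(* Let $X$ be an $n$-dimensional real normed space and let $Y \subseteq X$ be a linear subspace of dimension $k$, where $1 \leq k \leq n-1$. Suppose that $x_0 \in X \setminus Y$ and $\{f_1, f_2, \ldots, f_l\} \subseteq \mathrm{ext}\, B_{X^*}$ is a minimal $I$-set for $Y$ with respect to $x_0$, where $l \geq 2$. Then the functionals $f_1|_Y, f_2|_Y, \ldots, f_{l-1}|_Y$ are linearly independent in $Y^*$.
   Context: $P_Y(x)=\{y\in Y:\|x-y\|=\mathrm{dist}(x,Y)\}$ is the set of best approximations of $x$ in $Y$. For $x_0\in X\setminus Y$, a set of functionals $\{f_1,\dots,f_l\}\subseteq \mathrm{ext}\,B_{X^*}$ (extreme points of the dual unit ball) is an $I$-set for $Y$ with respect to $x_0$ if there exist $y_0\in P_Y(x_0)$ and positive reals $\alpha_1,\dots,\alpha_l$ with $\sum_i\alpha_i=1$ such that $f_i(x_0-y_0)=\|x_0-y_0\|$ for all $i$ and $\sum_{i=1}^l\alpha_i f_i(y)=0$ for all $y\in Y$. An $I$-set is minimal if no proper subset of it is an $I$-set for $Y$ with respect to $x_0$. *)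

From HB Require Import structures.
From mathcomp Require Import all_boot all_order all_algebra.
From mathcomp Require Import classical_sets reals.
Set Implicit Arguments.
Unset Strict Implicit.
Unset Printing Implicit Defensive.
Import Order.TTheory GRing.Theory Num.Theory.
Local Open Scope ring_scope.

Section Defs.
Variables (R : realType) (X : vectType R).

Definition is_norm (N : X -> R) : Prop :=
  [/\ forall x y, N (x + y) <= N x + N y,
      forall (a : R) x, N (a *: x) = `|a| * N x
    & forall x, N x = 0 -> x = 0].

(* dual space X^* = 'Hom(X, R^o); closed unit ball of X^* w.r.t. the dual norm *)
Definition in_dual_ball (N : X -> R) (f : 'Hom(X, R^o)) : Prop :=
  forall x, `|(f x : R)| <= N x.

Definition ext_dual_ball (N : X -> R) (f : 'Hom(X, R^o)) : Prop :=
  in_dual_ball N f /\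
  forall (g h : 'Hom(X, R^o)) (t : R), 0 < t < 1 ->
    in_dual_ball N g -> in_dual_ball N h ->
    f = t *: g + (1 - t) *: h -> g = h.

Definition dist_sub (N : X -> R) (x : X) (Y : {vspace X}) : R :=
  inf [set N (x - y) | y in [set y : X | y \in Y]].

Definition best_approx (N : X -> R) (Y : {vspace X}) (x : X) : set X :=
  [set y : X | y \in Y /\ N (x - y) = dist_sub N x Y].

Definition is_Iset_on (N : X -> R) (Y : {vspace X}) (x0 : X)
    (I : finType) (f : I -> 'Hom(X, R^o)) (S : {set I}) : Prop :=
  (forall i, i \in S -> ext_dual_ball N (f i)) /\
  exists y0 : X, best_approx N Y x0 y0 /\
  exists alpha : I -> R,
    [/\ forall i, i \in S -> 0 < alpha i,
        \sum_(i in S) alpha i = 1,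
        forall i, i \in S -> (f i (x0 - y0) : R) = N (x0 - y0)
      & forall y, y \in Y -> \sum_(i in S) alpha i * (f i y : R) = 0].

Definition is_minimal_Iset (N : X -> R) (Y : {vspace X}) (x0 : X)
    (I : finType) (f : I -> 'Hom(X, R^o)) : Prop :=
  is_Iset_on N Y x0 f [set: I]%SET /\
  forall S : {set I}, S \proper [set: I]%SET -> ~ is_Iset_on N Y x0 f S.

Definition restr (Y : {vspace X}) (f : 'Hom(X, R^o)) : 'Hom(subvs_of Y, R^o) :=
  (f \o linfun (@vsval _ _ Y))%VF.

End Defs.

From HB Require Import structures.
From mathcomp Require Import all_boot all_order all_algebra.
From mathcomp Require Import classical_sets reals.

Set Implicit Arguments.
Unset Strict Implicit.
Unset Printing Implicit Defensive.
Import Order.TTheory GRing.Theory Num.Theory.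
Local Open Scope ring_scope.

(* If sum_i c_i f_i|_Y = 0 with c_l = 0 and, say, c_j > 0 (otherwise use -c),
   move the weights alpha of the I-set to alpha - t c for the largest t keeping
   them nonnegative. The new weights still annihilate Y, stay positive at l and
   vanish somewhere, so their support is a proper sub-I-set, contradicting
   minimality. *)

Lemma free_map_ordP (K : fieldType) (vT : vectType K) (m : nat)
    (g : 'I_m -> vT) :
  reflect (forall k : 'I_m -> K, \sum_i k i *: g i = 0 -> forall i, k i = 0)
          (free [seq g i | i <- enum 'I_m]).
Proof.
have -> : [seq g i | i <- enum 'I_m] = map_tuple g (ord_tuple m).
  by rewrite -val_ord_tuple.
have gE (i : 'I_m) : (map_tuple g (ord_tuple m))`_i = g i.
  by rewrite -tnth_nth tnth_map tnth_ord_tuple.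
apply: (iffP freeP) => free_g k k_rel; apply: free_g; rewrite -[RHS]k_rel;
by apply: eq_bigr => i _; rewrite gE.
Qed.

Lemma exists_boundary_step (R : realFieldType) (I : finType)
    (alpha c : I -> R) (j : I) :
  (forall i, 0 < alpha i) -> 0 < c j ->
  exists2 t, 0 < t &
    (forall i, 0 <= alpha i - t * c i) /\ exists m, alpha m - t * c m = 0.
Proof.
move=> alpha_gt0 cj_gt0.
have [m cm_gt0 m_min] :=
  @arg_minP _ _ _ j (fun i => 0 < c i) (fun i => alpha i / c i) cj_gt0.
exists (alpha m / c m); first exact: divr_gt0.
split; last by exists m; rewrite divfK ?subrr ?gt_eqF.
move=> i; rewrite subr_ge0; have [ci_gt0|ci_le0] := ltrP 0 (c i).
  by rewrite -ler_pdivlMr // m_min.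
by apply: le_trans (ltW (alpha_gt0 i)); rewrite pmulr_rle0 // divr_gt0.
Qed.

Section MinimalIset.
Variables (R : realType) (X : vectType R) (N : X -> R) (Y : {vspace X})
  (x0 : X) (I : finType) (f : I -> 'Hom(X, R^o)).

Definition restr_relation (c : I -> R) : Prop :=
  forall y, y \in Y -> \sum_i c i * (f i y : R) = 0.

Lemma restr_relationZ (a : R) (c : I -> R) :
  restr_relation c -> restr_relation (fun i => a * c i).
Proof.
move=> c_rel y yY; under eq_bigr do rewrite -mulrA.
by rewrite -mulr_sumr c_rel ?mulr0.
Qed.

Lemma restr_relationB (c d : I -> R) :
  restr_relation c -> restr_relation d -> restr_relation (c \- d).
Proof.
move=> c_rel d_rel y yY; under eq_bigr do rewrite /= mulrBl.
by rewrite sumrB c_rel ?d_rel ?subrr.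
Qed.

Lemma Iset_onT_restr_relation :
  is_Iset_on N Y x0 f [set: I] ->
  (forall i, ext_dual_ball N (f i)) /\
  exists2 y0, best_approx N Y x0 y0 &
    (forall i, (f i (x0 - y0) : R) = N (x0 - y0)) /\
    exists2 alpha, (forall i, 0 < alpha i) & restr_relation alpha.
Proof.
move=> [ext [y0 [y0_best [alpha [alpha_gt0 _ aligned alpha_rel]]]]].
split=> [i|]; first by apply: ext; rewrite inE.
exists y0 => //; split=> [i|]; first by apply: aligned; rewrite inE.
exists alpha => [i|y yY]; first by apply: alpha_gt0; rewrite inE.
by rewrite -[RHS](alpha_rel y yY); apply: eq_bigl => i; rewrite inE.
Qed.

Lemma Iset_on_support (y0 : X) (beta : I -> R) (i0 : I) :
  (forall i, ext_dual_ball N (f i)) -> best_approx N Y x0 y0 ->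
  (forall i, (f i (x0 - y0) : R) = N (x0 - y0)) ->
  (forall i, 0 <= beta i) -> 0 < beta i0 -> restr_relation beta ->
  is_Iset_on N Y x0 f [set i | 0 < beta i].
Proof.
move=> ext y0_best aligned beta_ge0 beta_i0 beta_rel.
set S := [set i | 0 < beta i].
have sum_S g : \sum_(i in S) beta i * g i = \sum_i beta i * g i.
  rewrite big_mkcond; apply: eq_bigr => i _; rewrite inE.
  have [//|beta_le0] := ltrP 0 (beta i).
  by rewrite (@le_anti _ _ (beta i) 0) ?beta_le0 ?beta_ge0 ?mul0r.
pose s := \sum_(i in S) beta i.
have s_gt0 : 0 < s by rewrite /s (bigD1 i0) ?inE //= ltr_pwDl // sumr_ge0.
split=> [i _|]; first exact: ext.
exists y0; split=> //; exists (fun i => beta i / s); split.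
- by move=> i; rewrite inE => beta_i; apply: divr_gt0.
- by rewrite -mulr_suml divff // gt_eqF.
- by move=> i _; apply: aligned.
move=> y yY; rewrite (eq_bigr (fun i => s^-1 * (beta i * (f i y : R)))).
  by rewrite -mulr_sumr sum_S beta_rel // mulr0.
by move=> i _; rewrite mulrAC mulrC.
Qed.

Hypothesis f_minimal : is_minimal_Iset N Y x0 f.

Lemma minimal_Iset_relation_le0 (c : I -> R) (i0 : I) :
  restr_relation c -> c i0 = 0 -> forall j, c j <= 0.
Proof.
move: f_minimal => [/Iset_onT_restr_relation [ext [y0 y0_best [aligned]]]].
move=> [alpha alpha_gt0 alpha_rel] minimal c_rel c_i0 j.
rewrite leNgt; apply/negP => cj_gt0.
have [t t_gt0 [beta_ge0 [m beta_m]]] := exists_boundary_step alpha_gt0 cj_gt0.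
pose beta := alpha \- (fun i => t * c i).
apply: (minimal [set i | 0 < beta i]).
  rewrite properT; apply/negP => /eqP S_full.
  have : m \in [set i | 0 < beta i] by rewrite S_full inE.
  by rewrite inE /beta /= beta_m ltxx.
apply: (Iset_on_support (i0 := i0) ext y0_best aligned) => //.
- by rewrite /beta /= c_i0 mulr0 subr0; exact: alpha_gt0.
- exact/restr_relationB/restr_relationZ.
Qed.

Lemma minimal_Iset_relation_eq0 (c : I -> R) (i0 : I) :
  restr_relation c -> c i0 = 0 -> forall j, c j = 0.
Proof.
move=> c_rel c_i0 j; apply/le_anti/andP; split.
  exact: minimal_Iset_relation_le0 c_rel c_i0 j.
rewrite -oppr_le0 -mulN1r.
apply: (minimal_Iset_relation_le0 (i0 := i0) (restr_relationZ (-1) c_rel)).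
by rewrite c_i0 mulr0.
Qed.

End MinimalIset.

Theorem mainTheorem13 (R : realType) (X : vectType R) (N : X -> R)
    (n k l : nat) (Y : {vspace X}) (x0 : X) (f : 'I_l -> 'Hom(X, R^o)) :
  is_norm N ->
  \dim {: X} = n ->
  \dim Y = k ->
  (1 <= k)%N -> (k <= n - 1)%N ->
  x0 \notin Y ->
  (2 <= l)%N ->
  injective f ->
  is_minimal_Iset N Y x0 f ->
  free [seq restr Y (f (widen_ord (leq_pred l) i)) | i <- enum 'I_l.-1].
Proof.
move=> _ _ _ _ _ _; case: l f => [|[|m]] f // _ _ f_minimal /=.
apply/free_map_ordP => a a_rel i.
pose c j := if unlift ord_max j is Some i then a i else 0.
have widenE (le_m : (m.+1 <= m.+2)%N) (j : 'I_m.+1) :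
  widen_ord le_m j = lift ord_max j by apply: ord_inj; rewrite lift_max.
have c_max : c ord_max = 0 by rewrite /c unlift_none.
have c_rel : restr_relation Y f c.
  move=> y yY; rewrite big_ord_recr /= c_max mul0r addr0.
  have := congr1 (fun g : 'Hom(subvs_of Y, R^o) => g (vsproj Y y)) a_rel.
  rewrite sum_lfunE zero_lfunE => a_rel_y; rewrite -[RHS]a_rel_y.
  apply: eq_bigr => j _.
  by rewrite !widenE /c liftK scale_lfunE /restr comp_lfunE lfunE /= vsprojK.
have := minimal_Iset_relation_eq0 f_minimal c_rel c_max (lift ord_max i).
by rewrite /c liftK.
Qed.
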